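(* Let $p>0$, let $u$ be a weight on $\mathbb R$ satisfying the doubling property $u(2I)\le Cu(I)$ for all intervals $I$, and let $w$ be a weight on $(0,\infty)$ with $w\in\Delta_2$. Then there is a constant $C'>0$ such that for every well-separated finite family of intervals $\{I_i\}_i$ and every choice of integers $j_i\in[-50,50]$, $$\frac1{C'}W^{1/p}\Big(u\big(\textstyle\bigcup_iI_{i,j_i}\big)\Big)\le W^{1/p}\Big(u\big(\textstyle\bigcup_iI_i\big)\Big)\le C'\,W^{1/p}\Big(u\big(\textstyle\bigcup_iI_{i,j_i}\big)\Big).$$
   Context: A weight $u$ on $\mathbb R$ is locally integrable with $u>0$ a.e.; $u(E)=\int_Eu$; $2I$ is the interval with the same center as $I$ and twice the length. A weight $w$ on $(0,\infty)$ is nonnegative locally integrable, $W(t)=\int_0^tw$; $w\in\Delta_2$ means $W(2r)\le CW(r)$ for all $r>0$. For an interval $I$ and an integer $j\in[-50,50]$, $I_{j}$ denotes the interval with $|I_j|=|I|$, $I_0=I$, and for $j\ne0$, $\mathrm{dist}(I_j,I)=(|j|-1)|I|$ with $I_j$ to the left of $I$ if $j<0$ and to the right if $j>0$; thus $101I=\bigcup_{j=-50}^{50}I_j$, where $101I$ is the interval with the same center as $I$ and $101$ times the length. For a family $\{I_i\}$, $I_{i,j}$ denotes $(I_i)_j$. A finite family of intervals $\{I_i\}$ is well-separated if the intervals $101I_i$ are pairwise disjoint. *)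

From HB Require Import structures.
From mathcomp Require Import all_boot all_order all_algebra.
From mathcomp Require Import all_classical all_reals all_analysis.
Set Implicit Arguments. Unset Strict Implicit. Unset Printing Implicit Defensive.
Import Order.TTheory GRing.Theory Num.Theory.
Local Open Scope classical_set_scope.
Local Open Scope ring_scope.

Section Defs.
Variable R : realType.
Notation mu := (@lebesgue_measure R).

Definition itv (a b : R) : set R := `]a, b[.

Definition itv_dil (lam a b : R) : set R :=
  `](a + b) / 2 - lam * ((b - a) / 2), (a + b) / 2 + lam * ((b - a) / 2)[.

(* I_j : same length as I, translated by j |I| (so dist(I_j, I) = (|j|-1)|I|
   for j <> 0, to the left if j < 0, to the right if j > 0). *)
Definition itv_shift (j : int) (a b : R) : set R :=
  `]a + j%:~R * (b - a), b + j%:~R * (b - a)[.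

Definition umeas (u : R -> R) (E : set R) : R :=
  fine (\int[mu]_(x in E) (u x)%:E)%E.

Definition Wfun (w : R -> R) (t : R) : R :=
  let D : set R := (`]0, t[%classic) in fine (\int[mu]_(x in D) (w x)%:E)%E.

Definition weight_R (u : R -> R) : Prop :=
  (forall a b : R, mu.-integrable `[a, b] (EFin \o u)) /\
  {ae mu, forall x, 0 < u x}.

(* weight on (0,oo): nonnegative, integrable on every (0,t), so W is finite *)
Definition weight_pos (w : R -> R) : Prop :=
  (forall x, 0 < x -> 0 <= w x) /\
  (forall t : R, 0 < t -> mu.-integrable `]0, t[ (EFin \o w)).

Definition doubling (u : R -> R) : Prop :=
  exists C : R, forall a b : R, a < b ->
    umeas u (itv_dil 2 a b) <= C * umeas u (itv a b).

Definition Delta2 (w : R -> R) : Prop :=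
  exists C : R, forall r : R, 0 < r -> Wfun w (2 * r) <= C * Wfun w r.

Definition well_separated (n : nat) (a b : 'I_n -> R) : Prop :=
  (forall i, a i < b i) /\
  (forall i k : 'I_n, i != k ->
     itv_dil 101 (a i) (b i) `&` itv_dil 101 (a k) (b k) = set0).
End Defs.

From HB Require Import structures.
From mathcomp Require Import all_boot all_order all_algebra.
From mathcomp Require Import all_classical all_reals all_analysis.
From mathcomp Require Import measurable_realfun lra.
Import Order.TTheory GRing.Theory Num.Theory.
Local Open Scope classical_set_scope.
Local Open Scope ring_scope.

(* Each interval I_i and each translate I_{i,j_i} lies in 101 I_i, and these
   dilates are pairwise disjoint, so both u-measures split as sums over i.
   For |j| <= 50 each of I_i and I_{i,j} lies in the 2^8-fold dilate of the
   other, so eight doublings give u(I_{i,j}) <= K^8 u(I_i) and conversely.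
   Iterating Delta_2 gives W(L t) <= C_L W(t) for every L, and the resulting
   two-sided bound survives the power 1/p. *)

Section interval_geometry.
Context {R : realType}.

Lemma subset_itv_centered (c c' h r : R) :
  `|c' - c| + h <= r -> `]c' - h, c' + h[ `<=` `]c - r, c + r[.
Proof.
rewrite -lerBrDr ler_norml => /andP[lo hi] x /=.
by rewrite !in_itv /= => /andP[x1 x2]; apply/andP; split; lra.
Qed.

Lemma itv_centered (a b : R) :
  itv a b = `](a + b) / 2 - (b - a) / 2, (a + b) / 2 + (b - a) / 2[%classic.
Proof.
by rewrite /itv; apply: (f_equal2 (fun l r => `]l, r[%classic)); lra.
Qed.

Lemma itv_shift_centered (j : int) (a b : R) :
  itv_shift j a b = `](a + b) / 2 + j%:~R * (b - a) - (b - a) / 2,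
                      (a + b) / 2 + j%:~R * (b - a) + (b - a) / 2[%classic.
Proof.
by rewrite /itv_shift; apply: (f_equal2 (fun l r => `]l, r[%classic)); lra.
Qed.

Lemma norm_shift_le {a b : R} {j : int} : a <= b -> (-50 <= j <= 50)%R ->
  `|j%:~R * (b - a)| <= 50 * (b - a).
Proof.
move=> ab /andP[jlo jhi]; have ba0 : 0 <= b - a by rewrite subr_ge0.
rewrite normrM (ger0_norm ba0); apply: ler_wpM2r => //.
rewrite ler_norml; apply/andP; split.
- by move: jlo; rewrite -(ler_int R) intrN.
- by move: jhi; rewrite -(ler_int R).
Qed.

Lemma itv_shift_sub_dil {j : int} {a b : R} : a < b -> (-50 <= j <= 50)%R ->
  itv a b `<=` itv_dil 101 a b /\ itv_shift j a b `<=` itv_dil 101 a b.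
Proof.
move=> ab hj; have := norm_shift_le (ltW ab) hj.
rewrite itv_centered itv_shift_centered /itv_dil => hP.
split; apply: subset_itv_centered.
- by rewrite subrr normr0; lra.
- by rewrite addrAC subrr add0r; lra.
Qed.

End interval_geometry.

Section weight_measure.
Context {R : realType} {u : R -> R}.
Hypothesis wu : weight_R u.
Local Notation mu := (@lebesgue_measure R).

Lemma measurable_weight : measurable_fun [set: R] (EFin \o u).
Proof.
have -> : [set: R] = \bigcup_(k : nat) `[- (k%:R), k%:R]%classic.
  apply/seteqP; split => // x _ /=; exists (Num.truncn `|x|).+1 => //=.
  by rewrite in_itv /= -ler_norml ltW // truncnS_gt.
apply/measurable_fun_bigcup => // k.
by case/integrableP: (wu.1 (- k%:R) k%:R).
Qed.

(* [u] is only a.e. positive, so integrals over sets are compared through its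
   positive part, which is nonnegative everywhere and equals [u] a.e. *)
Let measurable_upos : measurable_fun [set: R] (funepos (EFin \o u)).
Proof. exact: measurable_funepos measurable_weight. Qed.

Let umeasE (E : set R) : measurable E ->
  umeas u E = fine (\int[mu]_(x in E) funepos (EFin \o u) x)%E.
Proof.
move=> mE; rewrite /umeas; congr fine; apply: ae_eq_integral => //.
- exact: measurable_funTS measurable_weight.
- exact: measurable_funTS measurable_upos.
- apply: (@filterS _ _ (ae_filter_ringOfSetsType mu) _ _ _ wu.2) => x ux _.
  by rewrite funeposE /= -EFin_max max_l // ltW.
Qed.

Let upos_integral_fin_num {S : set R} {x y : R} :
  measurable S -> S `<=` `]x, y[ ->
  (\int[mu]_(z in S) funepos (EFin \o u) z)%E \is a fin_num.
Proof.
move=> mS Sxy; apply: integrable_fin_num => //; apply: integrable_funepos => //.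
apply: integrableS (wu.1 x y) => //.
by apply: subset_trans Sxy _ => z /=; apply: subset_itv_oo_cc.
Qed.

Lemma umeas_ge0 (S : set R) : measurable S -> 0 <= umeas u S.
Proof. by move=> mS; rewrite umeasE //; apply/fine_ge0/integral_ge0. Qed.

Lemma umeas_le_itv (S : set R) (x y : R) : measurable S -> S `<=` `]x, y[ ->
  umeas u S <= umeas u `]x, y[.
Proof.
move=> mS Sxy; rewrite !umeasE //; apply: fine_le.
- exact: upos_integral_fin_num mS Sxy.
- by apply: (upos_integral_fin_num (x:=x) (y:=y)).
- apply: ge0_subset_integral => //; exact: measurable_funTS measurable_upos.
Qed.

Lemma umeas_bigcup_itv n (x y : 'I_n -> R) :
  (forall i k, i != k -> `]x i, y i[ `&` `]x k, y k[ = set0 :> set R) ->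
  umeas u (\bigcup_i `]x i, y i[%classic) = \sum_i umeas u `]x i, y i[.
Proof.
move=> disj.
have -> : \bigcup_i `]x i, y i[%classic =
          \big[setU/set0]_(i <- enum 'I_n) `]x i, y i[%classic.
  by rewrite -bigcup_seq; apply: eq_bigcupl; split => i _ //=; rewrite mem_enum.
rewrite umeasE; last exact: bigsetU_measurable.
rewrite ge0_integral_bigsetU ?enum_uniq //.
- rewrite (eq_bigr (fun i => (umeas u `]x i, y i[)%:E)); last first.
    move=> i _; rewrite umeasE // fineK //.
    by apply: (upos_integral_fin_num (x:=x i) (y:=y i)).
  by rewrite sumEFin /= big_enum.
- move=> i k _ _ [z [zi zk]]; apply/eqP; apply: contraT => ik.
  by have := disj i k ik; rewrite -subset0 => /(_ z (conj zi zk)).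
- exact: measurable_funTS measurable_upos.
Qed.

Lemma umeas_bigcup_ge0 {n : nat} {F : 'I_n -> set R} :
  (forall i, measurable (F i)) -> 0 <= umeas u (\bigcup_i F i).
Proof.
move=> mF; apply: umeas_ge0.
by apply: fin_bigcup_measurable => [|i _]; [exact: finite_finset | exact: mF].
Qed.

Definition iter_doubling (K : R) := forall (c h : R) (k : nat), 0 < h ->
  umeas u `]c - 2 ^+ k * h, c + 2 ^+ k * h[ <= K ^+ k * umeas u `]c - h, c + h[.

Lemma doubling_iter : doubling u -> exists K, iter_doubling K.
Proof.
move=> [C hC]; exists (Num.max C 1) => c h k h0; elim: k => [|k IH].
  by rewrite !expr0 !mul1r.
have hk : 0 < 2 ^+ k * h by rewrite mulr_gt0 // exprn_gt0.
have := hC (c - 2 ^+ k * h) (c + 2 ^+ k * h) ltac:(lra).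
have -> : itv_dil 2 (c - 2 ^+ k * h) (c + 2 ^+ k * h) =
          `]c - 2 ^+ k.+1 * h, c + 2 ^+ k.+1 * h[%classic.
  rewrite /itv_dil exprS -mulrA.
  by apply: (f_equal2 (fun l r => `]l, r[%classic)); lra.
move=> /le_trans; apply; rewrite exprS -mulrA.
set I := `]c - 2 ^+ k * h, c + 2 ^+ k * h[%classic.
have m0 : 0 <= umeas u I by apply: umeas_ge0; exact: measurable_itv.
apply: (@le_trans _ _ (Num.max C 1 * umeas u I)).
  by apply: ler_wpM2r => //; rewrite le_max lexx.
by apply: ler_wpM2l => //; rewrite le_max ler01 orbT.
Qed.

Lemma umeas_le_centered K c h (S : set R) : iter_doubling K -> 0 < h ->
  measurable S -> S `<=` `]c - 256 * h, c + 256 * h[ ->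
  umeas u S <= K ^+ 8 * umeas u `]c - h, c + h[.
Proof.
move=> HK h0 mS Ssub; apply: le_trans (HK c h 8%N h0).
by apply: umeas_le_itv; rewrite // (_ : 2 ^+ 8 = 256) //; lra.
Qed.

Lemma umeas_itv_shift_le {K : R} {j : int} {a b : R} :
  iter_doubling K -> a < b -> (-50 <= j <= 50)%R ->
  umeas u (itv_shift j a b) <= K ^+ 8 * umeas u (itv a b) /\
  umeas u (itv a b) <= K ^+ 8 * umeas u (itv_shift j a b).
Proof.
move=> HK ab hj; have := norm_shift_le (ltW ab) hj.
rewrite itv_centered itv_shift_centered => hP.
have h0 : 0 < (b - a) / 2 by lra.
split; apply: umeas_le_centered => //; try exact: measurable_itv.
- by apply: subset_itv_centered; rewrite addrAC subrr add0r; lra.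
- by apply: subset_itv_centered; rewrite distrC addrAC subrr add0r; lra.
Qed.

Lemma umeas_bigcup_shift_le {K : R} {n : nat} {a b : 'I_n -> R}
    {js : 'I_n -> int} :
  iter_doubling K -> well_separated a b -> (forall i, -50 <= js i <= 50)%R ->
  umeas u (\bigcup_i itv_shift (js i) (a i) (b i)) <=
    K ^+ 8 * umeas u (\bigcup_i itv (a i) (b i)) /\
  umeas u (\bigcup_i itv (a i) (b i)) <=
    K ^+ 8 * umeas u (\bigcup_i itv_shift (js i) (a i) (b i)).
Proof.
move=> HK [ab sep] hjs.
have disj (F : 'I_n -> set R) : (forall i, F i `<=` itv_dil 101 (a i) (b i)) ->
    forall i k, i != k -> F i `&` F k = set0.
  move=> Fsub i k ik; apply/seteqP; split => // x [Fi Fk].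
  by rewrite -(sep i k ik); split; apply: Fsub.
have -> : umeas u (\bigcup_i itv (a i) (b i)) =
          \sum_i umeas u (itv (a i) (b i)).
  apply: umeas_bigcup_itv; apply: (disj (fun i => itv (a i) (b i))) => i.
  exact: (itv_shift_sub_dil (ab i) (hjs i)).1.
have -> : umeas u (\bigcup_i itv_shift (js i) (a i) (b i)) =
          \sum_i umeas u (itv_shift (js i) (a i) (b i)).
  apply: umeas_bigcup_itv.
  apply: (disj (fun i => itv_shift (js i) (a i) (b i))) => i.
  exact: (itv_shift_sub_dil (ab i) (hjs i)).2.
rewrite !mulr_sumr; split; apply: ler_sum => i _.
- exact: (umeas_itv_shift_le HK (ab i) (hjs i)).1.
- exact: (umeas_itv_shift_le HK (ab i) (hjs i)).2.
Qed.

End weight_measure.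

Section Delta2_weight.
Context {R : realType} {w : R -> R}.
Hypothesis wp : weight_pos w.

Lemma Wfun_ge0 t : 0 <= Wfun w t.
Proof.
apply/fine_ge0/integral_ge0 => x /=; rewrite in_itv /= => /andP[x0 _].
by rewrite lee_fin; apply: wp.1.
Qed.

Lemma Wfun_le0 t : t <= 0 -> Wfun w t = 0.
Proof.
move=> t0; rewrite /Wfun (_ : `]0, t[%classic = set0) ?integral_set0 //.
by apply/seteqP; split => // x /=; rewrite in_itv /= => /andP[]; lra.
Qed.

Lemma le_Wfun : {homo Wfun w : s t / s <= t}.
Proof.
move=> s t st; have [s0|s0] := leP s 0; first by rewrite Wfun_le0 // Wfun_ge0.
have t0 : 0 < t by lra.
have [w0 iw] := wp; apply: fine_le.
- by apply: integrable_fin_num; [exact: measurable_itv | exact: iw].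
- by apply: integrable_fin_num; [exact: measurable_itv | exact: iw].
apply: ge0_subset_integral => //=.
- by case/integrableP: (iw t t0).
- by move=> x; rewrite in_itv /= => /andP[x0 _]; rewrite lee_fin w0.
- by move=> x /=; rewrite !in_itv /= => /andP[x0 xs]; apply/andP; split; lra.
Qed.

Lemma Delta2_iter : Delta2 w -> exists M, 1 <= M /\
  forall (k : nat) t, 0 <= t -> Wfun w (2 ^+ k * t) <= M ^+ k * Wfun w t.
Proof.
move=> [C hC]; exists (Num.max C 1); split => [|k t].
  by rewrite le_max lexx orbT.
rewrite le_eqVlt => /orP[/eqP <-|t0]; first by rewrite mulr0 Wfun_le0 // mulr0.
elim: k => [|k IH]; first by rewrite !expr0 !mul1r.
have hk : 0 < 2 ^+ k * t by rewrite mulr_gt0 // exprn_gt0.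
have := hC _ hk; rewrite exprS -mulrA => /le_trans; apply.
apply: (@le_trans _ _ (Num.max C 1 * Wfun w (2 ^+ k * t))).
  by apply: ler_wpM2r; [exact: Wfun_ge0 | rewrite le_max lexx].
by rewrite exprS -mulrA; apply: ler_wpM2l => //; rewrite le_max ler01 orbT.
Qed.

Lemma Delta2_le_scale : Delta2 w -> forall L : R, exists2 C : R, 0 < C &
  forall s t, 0 <= t -> s <= L * t -> Wfun w s <= C * Wfun w t.
Proof.
move=> /Delta2_iter [M [M1 HM]] L.
pose m := (Num.truncn L).+1.
have Lm : L <= 2 ^+ m.
  apply/ltW/(lt_le_trans (truncnS_gt L)).
  by rewrite -natrX ler_nat ltnW // ltn_expl.
exists (M ^+ m); first by rewrite exprn_gt0 //; lra.
move=> s t t0 st; apply: le_trans (HM m t t0); apply: le_Wfun.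
by apply: (le_trans st); apply: ler_wpM2r.
Qed.

End Delta2_weight.

Lemma powR_le_mul (R : realType) (q c s t : R) :
  0 <= q -> 0 <= c -> 0 <= s -> 0 <= t -> s <= c * t ->
  s `^ q <= c `^ q * t `^ q.
Proof.
move=> q0 c0 s0 t0 st; rewrite -powRM //.
by apply: ge0_ler_powR; rewrite ?nnegrE ?mulr_ge0.
Qed.

Theorem lemma3p7 (R : realType) (p : R) (u w : R -> R) :
  0 < p -> weight_R u -> doubling u -> weight_pos w -> Delta2 w ->
  exists C' : R, 0 < C' /\
    forall (n : nat) (a b : 'I_n -> R) (js : 'I_n -> int),
      well_separated a b ->
      (forall i, -50 <= js i <= 50)%R ->
      let A := powR (Wfun w (umeas u (\bigcup_i itv (a i) (b i)))) (1 / p) in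
      let B := powR (Wfun w (umeas u (\bigcup_i itv_shift (js i) (a i) (b i))))
                    (1 / p) in
      C'^-1 * B <= A /\ A <= C' * B.
Proof.
move=> p0 wu du wp dw.
have [K HK] := doubling_iter wu du.
have [C C0 HC] := Delta2_le_scale wp dw (K ^+ 8).
exists (C `^ (1 / p)); split; first exact: powR_gt0.
move=> n a b js ws hjs A B.
have [YX XY] := umeas_bigcup_shift_le wu HK ws hjs.
have q0 : 0 <= 1 / p by rewrite divr_ge0 // ltW.
have X0 := umeas_bigcup_ge0 wu
  (fun i => measurable_itv _ : measurable (itv (a i) (b i))).
have Y0 := umeas_bigcup_ge0 wu
  (fun i => measurable_itv _ : measurable (itv_shift (js i) (a i) (b i))).
split.
- rewrite ler_pdivrMl ?powR_gt0 //.
  exact: powR_le_mul (ltW C0) (Wfun_ge0 wp _) (Wfun_ge0 wp _) (HC _ _ X0 YX).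
- exact: powR_le_mul (ltW C0) (Wfun_ge0 wp _) (Wfun_ge0 wp _) (HC _ _ Y0 XY).
Qed.
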